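(* Let $N=2J$ with $J\ge 1$ an integer. For real numbers $\gamma_1,\dots,\gamma_{N-2}$ satisfying $\gamma_n=\gamma_{N-1-n}$ for all $n$, let $H=H(\gamma)$ be the real $N\times N$ matrix with entries $$H_{n,n}=2n-1-N\ (1\le n\le N),\qquad H_{n,n+2}=\gamma_n,\quad H_{n+2,n}=-\gamma_n\ (1\le n\le N-2),$$ and all other entries zero. Then: (a) The span of the odd-indexed standard basis vectors $e_1,e_3,\dots,e_{2J-1}$ and the span of the even-indexed ones $e_2,e_4,\dots,e_{2J}$ are both invariant under $H$, so $H$ is permutation-similar to $A\oplus B$, where $A$ is the $J\times J$ tridiagonal matrix with diagonal $(1-2J,5-2J,\dots,2J-3)$, superdiagonal $(\gamma_1,\gamma_3,\dots,\gamma_{2J-3})$ and subdiagonal $(-\gamma_1,-\gamma_3,\dots,-\gamma_{2J-3})$, and $B$ is the $J\times J$ tridiagonal matrix with diagonal $(3-2J,7-2J,\dots,2J-1)$, superdiagonal $(\gamma_2,\gamma_4,\dots,\gamma_{2J-2})$ and subdiagonal the negatives of these. (b) If all eigenvalues of $A$ coincide, their common value is $\eta=-1$; if all eigenvalues of $B$ coincide, their common value is $\eta=+1$. Consequently, for no real choice of the $\gamma_n$ does $H$ have a single eigenvalue of algebraic multiplicity $N$. (c) For the choice $\gamma_{2k-1}=\gamma_{2k}=2\sqrt{k(J-k)}$, $k=1,\dots,J-1$ (which satisfies $\gamma_n=\gamma_{N-1-n}$), one has $A=-I_J+2T_J$ and $B=I_J+2T_J$; thus $A$ has the single eigenvalue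 $-1$ and $B$ the single eigenvalue $+1$, each with a single Jordan block of size $J$ (geometric multiplicity one).
   Context: For an integer $M\ge1$, $T_M$ denotes the real $M\times M$ tridiagonal matrix with $(T_M)_{k,k}=2k-1-M$ for $1\le k\le M$, $(T_M)_{k,k+1}=\sqrt{k(M-k)}$ and $(T_M)_{k+1,k}=-\sqrt{k(M-k)}$ for $1\le k\le M-1$, all other entries zero (so $T_1=[0]$, $T_2=\begin{pmatrix}-1&1\\-1&1\end{pmatrix}$, $T_3=\begin{pmatrix}-2&\sqrt2&0\\-\sqrt2&0&\sqrt2\\0&-\sqrt2&2\end{pmatrix}$). It is used that $T_M$ is nilpotent with a single Jordan block of size $M$ (the exceptional-point limit of the tridiagonal toy Hamiltonian of dimension $M$). *)

From HB Require Import structures.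
From mathcomp Require Import all_boot all_order all_algebra.
From mathcomp Require Import fingroup perm complex.
Set Implicit Arguments. Unset Strict Implicit. Unset Printing Implicit Defensive.
Import Order.TTheory GRing.Theory Num.Theory.
Local Open Scope ring_scope.

(* All matrices are indexed from 0; paper index n corresponds to i = n - 1. *)

Definition Tmat (R : rcfType) (M : nat) : 'M[R]_M :=
  \matrix_(i < M, j < M)
    if i == j :> nat then (2 * i + 1)%:R - M%:R
    else if j == i.+1 :> nat then Num.sqrt ((i.+1 * (M - i.+1))%:R)
    else if i == j.+1 :> nat then - Num.sqrt ((j.+1 * (M - j.+1))%:R)
    else 0.

(* H(gamma), N = 2J, gamma : nat -> R (only gamma 1 .. gamma (N-2) are used) *)
Definition Hmat (R : rcfType) (J : nat) (g : nat -> R) : 'M[R]_(J + J) :=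
  \matrix_(i < J + J, j < J + J)
    if i == j :> nat then (2 * i + 1)%:R - (J + J)%:R
    else if j == i.+2 :> nat then g i.+1
    else if i == j.+2 :> nat then - g j.+1
    else 0.

Definition Amat (R : rcfType) (J : nat) (g : nat -> R) : 'M[R]_J :=
  \matrix_(i < J, j < J)
    if i == j :> nat then (4 * i + 1)%:R - (2 * J)%:R
    else if j == i.+1 :> nat then g (2 * i + 1)%N
    else if i == j.+1 :> nat then - g (2 * j + 1)%N
    else 0.

Definition Bmat (R : rcfType) (J : nat) (g : nat -> R) : 'M[R]_J :=
  \matrix_(i < J, j < J)
    if i == j :> nat then (4 * i + 3)%:R - (2 * J)%:R
    else if j == i.+1 :> nat then g (2 * i + 2)%N
    else if i == j.+1 :> nat then - g (2 * j + 2)%N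
    else 0.

(* row matrix whose rows are the standard basis vectors e_n, n odd (paper, 1-based),
   i.e. 0-based indices i = 2k *)
Definition Vodd (R : rcfType) (J : nat) : 'M[R]_(J, J + J) :=
  \matrix_(k < J, j < J + J) if j == (2 * k)%N :> nat then 1 else 0.
Definition Veven (R : rcfType) (J : nat) : 'M[R]_(J, J + J) :=
  \matrix_(k < J, j < J + J) if j == (2 * k + 1)%N :> nat then 1 else 0.

(* the choice of part (c): gamma_{2k-1} = gamma_{2k} = 2 sqrt(k(J-k)) *)
Definition gc (R : rcfType) (J : nat) (n : nat) : R :=
  let k := n.+1./2 in 2 * Num.sqrt ((k * (J - k))%:R).

Definition toCmx (R : rcfType) m n (A : 'M[R]_(m, n)) : 'M[complex R]_(m, n) :=
  map_mx (real_complex R) A.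

From mathcomp Require Import all_boot all_order all_algebra.
From mathcomp Require Import fingroup perm complex.
From mathcomp Require Import zify ring.
Set Implicit Arguments. Unset Strict Implicit. Unset Printing Implicit Defensive.
Import Order.TTheory GRing.Theory Num.Theory.
Local Open Scope ring_scope.

(* Proof plan.
   (a) Let s be the permutation of 'I_(2J) sending i < J to 2i and J + b to
   2b + 1.  Conjugating H by perm_mx s sorts rows and columns by parity; since
   H only couples indices of equal parity, the result is block_mx A 0 0 B.
   The matrices Vodd and Veven are the upper and lower halves of perm_mx s,
   which gives the two stability statements.
   (b) Over an algebraically closed field of characteristic 0, a matrix with a
   single eigenvalue a has characteristic polynomial ('X - a)^n, hence trace
   n * a.  As tr A = -J and tr B = J, the eigenvalue is -1 for A and +1 for B.
   Since char H = char A * char B, a single eigenvalue of H would be the single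
   eigenvalue of both A and B, forcing -1 = 1.
   (c) T_M is similar to a strictly lower triangular matrix S: T_M Q = Q S with
   Q_{p,m} = d_p C(m,p) upper unitriangular up to nonzero scalars d_p; this is a
   Pascal-type binomial identity.  Hence c + a T_M has characteristic
   polynomial ('X - c)^M, and its kernel for a != 0 is that of S, a line. *)

Ltac dec_eqs := repeat match goal with
 | |- context [ @eq_op ?T ?x ?y ] =>
   first [ rewrite (_ : (x == y) = true); last by lia
         | rewrite (_ : (x == y) = false); last by lia
         | case: (@eqP T x y) => ?; try subst ]
 end.

Section Similarity.
Variable F : fieldType.

Lemma char_poly_similar n (X Y Q : 'M[F]_n) :
  Q \in unitmx -> X *m Q = Q *m Y -> char_poly X = char_poly Y.
Proof.
move=> uQ XQ_QY.
have E : char_poly_mx X *m map_mx polyC Q = map_mx polyC Q *m char_poly_mx Y.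
  rewrite /char_poly_mx mulmxBl mulmxBr -!map_mxM XQ_QY.
  by rewrite mul_scalar_mx mul_mx_scalar.
move/(congr1 determinant): E; rewrite !det_mulmx det_map_mx mulrC.
by apply: mulfI; rewrite polyC_eq0 -unitfE -unitmxE.
Qed.

Lemma mxrank_similar n (X Y Q : 'M[F]_n) :
  Q \in unitmx -> X *m Q = Q *m Y -> \rank X = \rank Y.
Proof.
move=> uQ XQ_QY.
rewrite -(mxrankMfree X (_ : row_free Q)) ?row_free_unit // XQ_QY.
by rewrite -mxrank_tr trmx_mul mxrankMfree ?mxrank_tr // row_free_unit unitmx_tr.
Qed.

Lemma char_poly_perm_conj n (s : 'S_n) (X Y : 'M[F]_n) :
  perm_mx s *m X *m (perm_mx s)^T = Y -> char_poly X = char_poly Y.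
Proof.
move=> conjXY; apply: (char_poly_similar (Q := (perm_mx s)^T)).
  by rewrite unitmx_tr unitmx_perm.
by rewrite -conjXY !mulmxA tr_perm_mx -perm_mxM mulVg perm_mx1 mul1mx.
Qed.

Lemma char_poly_block_diag n1 n2 (A : 'M[F]_n1) (B : 'M[F]_n2) :
  char_poly (block_mx A 0 0 B) = char_poly A * char_poly B.
Proof. by rewrite /char_poly char_block_diag_mx det_ublock. Qed.

End Similarity.

Lemma mxtrace_char_poly (R : comNzRingType) n (X Y : 'M[R]_n) :
  char_poly X = char_poly Y -> \tr X = \tr Y.
Proof.
case: n X Y => [|n] X Y eXY; first by rewrite /mxtrace !big_ord0.
by apply: oppr_inj; rewrite -!char_poly_trace // eXY.
Qed.

Lemma char_poly_scalar (R : comNzRingType) n (a : R) :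
  char_poly (a%:M : 'M[R]_n) = ('X - a%:P) ^+ n.
Proof.
rewrite char_poly_trig ?scalar_mx_is_trig //.
under eq_bigr do rewrite mxE eqxx mulr1n.
by rewrite prodr_const card_ord.
Qed.

Section SingleEigenvalue.
Variable F : numClosedFieldType.

Lemma char_poly_single_eigenvalue n (X : 'M[F]_n) (a : F) :
  (forall b, eigenvalue X b -> b = a) -> char_poly X = ('X - a%:P) ^+ n.
Proof.
move=> single; have [rs Xrs] := closed_field_poly_normal (char_poly X).
rewrite (monicP (char_poly_monic X)) scale1r in Xrs.
have /all_pred1P rs_a : all (pred1 a) rs.
  apply/allP => z zr /=; apply/eqP/single.
  by rewrite eigenvalue_root_char Xrs root_prod_XsubC.
have Xa : char_poly X = ('X - a%:P) ^+ size rs.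
  by rewrite Xrs rs_a big_nseq iter_mulr_1 size_nseq.
have size_rs : size rs = n by have := size_char_poly X; rewrite Xa size_exp_XsubC => -[].
by rewrite Xa size_rs.
Qed.

Lemma eigenvalue_exists n (X : 'M[F]_n) : (0 < n)%N -> exists a, eigenvalue X a.
Proof.
move=> n_gt0; have : size (char_poly X) != 1%N by rewrite size_char_poly; case: n X n_gt0.
by case/closed_rootP => a ha; exists a; rewrite eigenvalue_root_char.
Qed.

Lemma single_eigenvalue_trace n (X : 'M[F]_n) (c : F) : (0 < n)%N ->
  \tr X = c *+ n ->
  (forall a b, eigenvalue X a -> eigenvalue X b -> a = b) ->
  forall a, eigenvalue X a -> a = c.
Proof.
move=> n_gt0 trX single a Xa.
have charX : char_poly X = char_poly (a%:M : 'M_n).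
  by rewrite char_poly_scalar; apply: char_poly_single_eigenvalue => b Xb; apply: single.
move: trX; rewrite (mxtrace_char_poly charX) mxtrace_scalar => /eqP.
by rewrite -subr_eq0 -mulrnBl mulrn_eq0 gtn_eqF //= subr_eq0 => /eqP.
Qed.

End SingleEigenvalue.

(* A Pascal-type identity for binomial coefficients; it is the column-by-column
   content of the intertwining relation T_M Q = Q S below (x stands for M). *)
Lemma binomial_recurrence (R : comNzRingType) (m p : nat) (x : R) :
  ((2 * p + 1)%:R - x) * 'C(m, p)%:R + p.+1%:R * 'C(m, p.+1)%:R
  - (if p is q.+1 then (x - p%:R) * 'C(m, q)%:R else 0)
  = (m.+1%:R - x) * 'C(m.+1, p)%:R.
Proof.
have pascal k : k.+1%:R * ('C(m, k)%:R + 'C(m, k.+1)%:R) = m.+1%:R * 'C(m, k)%:R :> R.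
  rewrite -!natrD -!natrM; congr (_%:R).
  by rewrite (mul_bin_diag m.+1) binS addnC.
case: p => [|q]; first by rewrite /= !bin0 bin1; ring.
have pascal_p := pascal q.+1; have pascal_q := pascal q.
rewrite (binS m q) [X in _ = _ * X]natrD.
move: pascal_p pascal_q; set X := 'C(m, q.+1)%:R; set Y := 'C(m, q.+2)%:R.
set W := 'C(m, q)%:R => pascal_p pascal_q.
have -> : (m.+1%:R - x) * (X + W) =
    ((2 * q.+1 + 1)%:R - x) * X + q.+2%:R * Y - (x - q.+1%:R) * W
    + (m.+1%:R * X - q.+2%:R * (X + Y)) + (m.+1%:R * W - q.+1%:R * (W + X)).
  by ring.
by rewrite -pascal_p -pascal_q !subrr !addr0.
Qed.

Lemma sum_ord_pick (R : nmodType) n (b : bool) (k : nat) (c : R) :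
  \sum_(i < n) (if b && ((i : nat) == k) then c else 0) = if b && (k < n)%N then c else 0.
Proof.
case: b => /=; last by rewrite big1.
case: ltnP => k_lt.
  rewrite (bigD1 (Ordinal k_lt)) //= eqxx big1 ?addr0 // => i /eqP ne.
  by case: eqP => // e; case: ne; apply: val_inj.
by rewrite big1 // => i _; case: eqP => // e; have := ltn_ord i; lia.
Qed.

Section TridiagonalSimilarity.
Variables (R : rcfType) (M : nat).

Definition toff (k : nat) : R := Num.sqrt ((k * (M - k))%:R).

Definition Tentry (p i : nat) : R :=
  if p == i then (2 * p + 1)%:R - M%:R
  else if i == p.+1 then toff p.+1
  else if p == i.+1 then - toff i.+1 else 0.

Lemma Tmat_entry (p i : 'I_M) : Tmat R M p i = Tentry p i.
Proof. by rewrite mxE. Qed.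

Lemma toff_gt0 k : (0 < k < M)%N -> 0 < toff k.
Proof. by move=> k_in; rewrite sqrtr_gt0 ltr0n muln_gt0; lia. Qed.

Lemma toff_sqr k : (k <= M)%N -> toff k ^+ 2 = k%:R * (M%:R - k%:R).
Proof. by move=> k_le; rewrite sqr_sqrtr ?ler0n // natrM natrB. Qed.

Lemma prod_toff_neq0 p : (p < M)%N -> \prod_(k < p) toff k.+1 != 0.
Proof.
move=> p_lt; rewrite prodf_seq_neq0; apply/allP => k _ /=.
by rewrite gt_eqF // toff_gt0 //; have := ltn_ord k; lia.
Qed.

Definition qscale (p : nat) : R := p`!%:R / \prod_(k < p) toff k.+1.

Lemma qscale_neq0 p : (p < M)%N -> qscale p != 0.
Proof.
move=> p_lt; rewrite /qscale mulf_neq0 ?invr_eq0 ?prod_toff_neq0 //.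
by rewrite pnatr_eq0 -lt0n fact_gt0.
Qed.

(* The two recurrences of d_p matching the super- and subdiagonal of T_M. *)
Lemma qscale_succ p : (p.+1 < M)%N -> toff p.+1 * qscale p.+1 = p.+1%:R * qscale p.
Proof.
move=> p_lt; rewrite /qscale big_ord_recr /= factS natrM.
have prod_neq0 := prod_toff_neq0 (ltnW p_lt).
have toff_neq0 : toff p.+1 != 0 by rewrite gt_eqF // toff_gt0 //; lia.
by field; apply/andP; split.
Qed.

Lemma qscale_pred p : (p.+1 < M)%N ->
  toff p.+1 * qscale p = (M%:R - p.+1%:R) * qscale p.+1.
Proof.
move=> p_lt; have p1_neq0 : p.+1%:R != 0 :> R by rewrite pnatr_eq0.
have -> : qscale p = toff p.+1 * qscale p.+1 / p.+1%:R.
  by rewrite qscale_succ // mulrAC mulfV // mul1r.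
rewrite !mulrA -expr2 toff_sqr; last by lia.
by field; rewrite prod_toff_neq0 //= addrC natr1.
Qed.

Definition Qmx : 'M[R]_M := \matrix_(p < M, m < M) (qscale p * 'C(m, p)%:R).
Definition Smx : 'M[R]_M :=
  \matrix_(i < M, j < M) if i == j.+1 :> nat then j.+1%:R - M%:R else 0.

Lemma Tentry_Qentry p i m :
  Tentry p i * (qscale i * 'C(m, i)%:R) =
  (if true && (i == p) then ((2 * p + 1)%:R - M%:R) * (qscale p * 'C(m, p)%:R) else 0)
  + (if true && (i == p.+1) then toff p.+1 * (qscale p.+1 * 'C(m, p.+1)%:R) else 0)
  + (if (0 < p)%N && (i == p.-1) then - toff p * (qscale p.-1 * 'C(m, p.-1)%:R) else 0).
Proof.
rewrite /Tentry /=; dec_eqs => /=; rewrite ?andbF ?addr0 ?add0r ?mul0r //=.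
all: match goal with h : ?i = ?i.-1 |- _ => rewrite (_ : (0 < i)%N = false) ?addr0 //; lia end.
Qed.

(* Entry (p, m) of T_M Q = Q S: this is binomial_recurrence with x = M. *)
Lemma TQ_QS_entry p m : (p < M)%N -> (m < M)%N ->
  ((2 * p + 1)%:R - M%:R) * (qscale p * 'C(m, p)%:R)
  + (if true && (p.+1 < M)%N then toff p.+1 * (qscale p.+1 * 'C(m, p.+1)%:R) else 0)
  + (if (0 < p)%N && (p.-1 < M)%N then - toff p * (qscale p.-1 * 'C(m, p.-1)%:R) else 0)
  = if true && (m.+1 < M)%N then qscale p * 'C(m.+1, p)%:R * (m.+1%:R - M%:R) else 0.
Proof.
move=> p_lt m_lt /=.
have -> : (if (m.+1 < M)%N then qscale p * 'C(m.+1, p)%:R * (m.+1%:R - M%:R) else 0)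
   = qscale p * 'C(m.+1, p)%:R * (m.+1%:R - M%:R).
  by case: ltnP => // m_ge; rewrite (_ : m.+1 = M) ?subrr ?mulr0 //; lia.
have -> : (if (p.+1 < M)%N then toff p.+1 * (qscale p.+1 * 'C(m, p.+1)%:R) else 0)
   = qscale p * (p.+1%:R * 'C(m, p.+1)%:R).
  case: ltnP => p_ge; first by rewrite mulrA qscale_succ //; ring.
  by rewrite bin_small ?mulr0 //; lia.
have := binomial_recurrence m p (M%:R : R).
case: p p_lt => [|q] p_lt /= recurrence.
  by rewrite -[RHS]mulrA (mulrC _ (_ - _)) -recurrence; ring.
rewrite (_ : (q < M)%N = true); last by lia.
rewrite mulNr (mulrA (toff q.+1)) qscale_pred //.
by rewrite -[RHS]mulrA (mulrC _ (_ - _)) -recurrence; ring.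
Qed.

Lemma TQ_QS : Tmat R M *m Qmx = Qmx *m Smx.
Proof.
apply/matrixP => p m; rewrite [LHS]mxE [RHS]mxE.
have QS_term (j : 'I_M) : Qmx p j * Smx j m =
    if true && ((j : nat) == m.+1) then qscale p * 'C(m.+1, p)%:R * (m.+1%:R - M%:R) else 0.
  by rewrite !mxE; case: eqP => [->|]; rewrite ?mulr0.
under eq_bigr do rewrite Tmat_entry mxE Tentry_Qentry.
under [RHS]eq_bigr do rewrite QS_term.
rewrite !big_split !sum_ord_pick ltn_ord /=.
exact: TQ_QS_entry.
Qed.

Lemma Qmx_unit : Qmx \in unitmx.
Proof.
rewrite unitmxE unitfE -det_tr det_trig.
  rewrite prodf_seq_neq0; apply/allP => i _ /=.
  by rewrite !mxE binn mulr1 qscale_neq0.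
by apply/is_trig_mxP => i j ij; rewrite !mxE bin_small ?mulr0.
Qed.

Lemma Smx_trig : is_trig_mx Smx.
Proof. by apply/is_trig_mxP => i j ij; rewrite !mxE; case: eqP => // e; lia. Qed.

Lemma char_poly_affine_Tmat (c a : R) :
  char_poly (c%:M + a *: Tmat R M) = ('X - c%:P) ^+ M.
Proof.
have sim : (c%:M + a *: Tmat R M) *m Qmx = Qmx *m (c%:M + a *: Smx).
  by rewrite mulmxDl mulmxDr -scalemxAl TQ_QS scalemxAr mul_scalar_mx mul_mx_scalar.
have trig : is_trig_mx (c%:M + a *: Smx).
  apply/is_trig_mxP => i j ij; have := is_trig_mxP Smx_trig i j ij; rewrite !mxE => ->.
  by rewrite (_ : (i == j) = false) ?mulr0n ?mulr0 ?addr0 // -val_eqE ltn_eqF.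
have diag (i : 'I_M) : (c%:M + a *: Smx) i i = c.
  by rewrite !mxE eqxx (_ : (i == i.+1 :> nat) = false) ?mulr0 ?addr0 //; lia.
rewrite (char_poly_similar Qmx_unit sim) char_poly_trig //.
by under eq_bigr do rewrite diag; rewrite prodr_const card_ord.
Qed.

End TridiagonalSimilarity.

(* The kernel of a nonzero multiple of T_M is a line: by similarity it has the
   dimension of the left kernel of S, which is spanned by e_0. *)
Section TridiagonalKernel.
Variables (R : rcfType) (n : nat).
Local Notation M := n.+1.

Lemma Smx_left_kernel (v : 'rV[R]_M) : v *m Smx R M = 0 -> v = v 0 0 *: delta_mx 0 0.
Proof.
move=> vS; apply/matrixP => x k; rewrite (ord1 x) !mxE.
have [->|k_neq0] := eqVneq k 0; first by rewrite eqxx mulr1.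
rewrite andbF mulr0.
have k_gt0 : (0 < k)%N by rewrite lt0n; apply: contra k_neq0 => /eqP k0; apply/eqP/val_inj.
pose j : 'I_M := inord k.-1.
have jk : j.+1 = k by rewrite inordK; have := ltn_ord k; lia.
(* Column j of v S is v_k (k - M), and k < M. *)
have := congr1 (fun w : 'rV[R]_M => w 0 j) vS; rewrite !mxE (bigD1 k) //= big1.
  rewrite addr0 !mxE jk eqxx => /eqP; rewrite mulf_eq0 => /orP[/eqP //|].
  by rewrite subr_eq0 eqr_nat => /eqP kM; have := ltn_ord k; lia.
move=> l lk; rewrite !mxE; case: eqP => [lj|]; last by rewrite mulr0.
by case/eqP: lk; apply: val_inj; rewrite /= lj jk.
Qed.

Lemma kermx_Smx_rank : \rank (kermx (Smx R M)) = 1%N.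
Proof.
have e0_ker : ((delta_mx 0 0 : 'rV[R]_M) <= kermx (Smx R M))%MS.
  by rewrite sub_kermx -rowE; apply/eqP/matrixP => i j; rewrite !mxE; case: eqP.
have ker_e0 : (kermx (Smx R M) <= (delta_mx 0 0 : 'rV[R]_M))%MS.
  apply/row_subP => i; rewrite (Smx_left_kernel (v := row i _)) ?scalemx_sub //.
  by apply/sub_kermxP; exact: row_sub.
have rank_e0 : \rank (delta_mx 0 0 : 'rV[R]_M) = 1%N by rewrite mxrank_delta.
by apply/eqP; rewrite eqn_leq -!rank_e0 !mxrankS.
Qed.

Lemma kermx_scaled_Tmat_rank (a : R) : a != 0 -> \rank (kermx (a *: Tmat R M)) = 1%N.
Proof.
move=> a_neq0; rewrite !mxrank_ker mxrank_scale_nz //.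
by rewrite (mxrank_similar (Qmx_unit _ _) (TQ_QS _ _)) -mxrank_ker kermx_Smx_rank.
Qed.

End TridiagonalKernel.

Section ParitySplitting.
Variables (R : rcfType) (J : nat) (g : nat -> R).

Definition interleave_nat (i : nat) : nat :=
  if (i < J)%N then (2 * i)%N else (2 * (i - J) + 1)%N.

Lemma interleave_nat_lt (i : 'I_(J + J)) : (interleave_nat i < J + J)%N.
Proof. by rewrite /interleave_nat; case: (ltnP i J) => iJ; have := ltn_ord i; lia. Qed.

Definition interleave (i : 'I_(J + J)) : 'I_(J + J) := Ordinal (interleave_nat_lt i).

Lemma interleave_inj : injective interleave.
Proof.
move=> i j /(congr1 val) /=; rewrite /interleave_nat => e; apply: val_inj => /=.
by move: e; case: (ltnP i J) => iJ; case: (ltnP j J) => jJ /=; lia.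
Qed.

Definition parity_perm : 'S_(J + J) := perm interleave_inj.

Lemma interleave_lshift (a : 'I_J) : interleave (lshift J a) = (2 * a)%N :> nat.
Proof. by rewrite /= /interleave_nat ltn_ord. Qed.

Lemma interleave_rshift (b : 'I_J) : interleave (rshift J b) = (2 * b + 1)%N :> nat.
Proof. by rewrite /= /interleave_nat ltnNge leq_addr /= addKn. Qed.

Lemma Hmat_even_even (i j : 'I_(J + J)) (a b : 'I_J) :
  i = (2 * a)%N :> nat -> j = (2 * b)%N :> nat -> Hmat J g i j = Amat J g a b.
Proof.
rewrite !mxE => -> ->; dec_eqs => //.
- by congr (_%:R - _%:R); lia.
- by rewrite addn1.
- by rewrite addn1.
Qed.

Lemma Hmat_odd_odd (i j : 'I_(J + J)) (a b : 'I_J) :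
  i = (2 * a + 1)%N :> nat -> j = (2 * b + 1)%N :> nat -> Hmat J g i j = Bmat J g a b.
Proof.
rewrite !mxE => -> ->; dec_eqs => //.
- by congr (_%:R - _%:R); lia.
- by congr (g _); lia.
- by congr (- g _); lia.
Qed.

Lemma Hmat_mixed_parity (i j : 'I_(J + J)) (a b : nat) :
  (i = (2 * a)%N :> nat /\ j = (2 * b + 1)%N :> nat) \/
  (i = (2 * a + 1)%N :> nat /\ j = (2 * b)%N :> nat) -> Hmat J g i j = 0.
Proof. by rewrite mxE => -[[-> ->] | [-> ->]]; dec_eqs. Qed.

Lemma Hmat_parity_blocks :
  perm_mx parity_perm *m Hmat J g *m (perm_mx parity_perm)^T =
  block_mx (Amat J g) 0 0 (Bmat J g).
Proof.
rewrite -row_permE tr_perm_mx -col_permE; apply/matrixP => i j.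
rewrite [LHS]mxE [LHS]mxE !permE -(splitK i) -(splitK j).
case: (split i) => a; case: (split j) => b /=.
- by rewrite block_mxEul; apply: Hmat_even_even; rewrite interleave_lshift.
- rewrite block_mxEur [RHS]mxE; apply: Hmat_mixed_parity; left.
  by rewrite interleave_lshift interleave_rshift.
- rewrite block_mxEdl [RHS]mxE; apply: Hmat_mixed_parity; right.
  by rewrite interleave_lshift interleave_rshift.
- by rewrite block_mxEdr; apply: Hmat_odd_odd; rewrite interleave_rshift.
Qed.

Lemma Vodd_usubmx : Vodd R J = usubmx (perm_mx parity_perm).
Proof.
apply/matrixP => k j; rewrite !mxE permE.
by rewrite -interleave_lshift val_eqE eq_sym; case: eqP.
Qed.

Lemma Veven_dsubmx : Veven R J = dsubmx (perm_mx parity_perm).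
Proof.
apply/matrixP => k j; rewrite !mxE permE.
by rewrite -interleave_rshift val_eqE eq_sym; case: eqP.
Qed.

Lemma perm_Hmat_tr : perm_mx parity_perm *m (Hmat J g)^T =
  (block_mx (Amat J g) 0 0 (Bmat J g))^T *m perm_mx parity_perm :> 'M[R]_(J + J).
Proof.
rewrite -Hmat_parity_blocks !trmx_mul trmxK -!mulmxA tr_perm_mx.
by rewrite -perm_mxM mulVg perm_mx1 mulmx1.
Qed.

Lemma Vodd_stable : stablemx (Vodd R J) (Hmat J g)^T.
Proof.
rewrite Vodd_usubmx mul_usub_mx perm_Hmat_tr tr_block_mx !trmx0 block_mxEv.
rewrite mul_col_mx col_mxKu -{1}(vsubmxK (perm_mx parity_perm)) mul_row_col.
by rewrite mul0mx addr0 submxMl.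
Qed.

Lemma Veven_stable : stablemx (Veven R J) (Hmat J g)^T.
Proof.
rewrite Veven_dsubmx mul_dsub_mx perm_Hmat_tr tr_block_mx !trmx0 block_mxEv.
rewrite mul_col_mx col_mxKd -{1}(vsubmxK (perm_mx parity_perm)) mul_row_col.
by rewrite mul0mx add0r submxMl.
Qed.

End ParitySplitting.

Section SpectralConstraints.
Variable R : rcfType.

Lemma sum_arithmetic_diagonal (J c : nat) :
  \sum_(i < J) ((4 * i + c)%:R - (2 * J)%:R : R) = (c%:R - 2) *+ J.
Proof.
have sum_lin k : \sum_(i < k) ((4 * i + c)%:R : R) = k%:R * (2 * k%:R - 2 + c%:R).
  elim: k => [|k IH]; first by rewrite big_ord0 mul0r.
  by rewrite big_ord_recr /= IH -natr1 ?natrD ?natrM; ring.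
rewrite sumrB sum_lin sumr_const card_ord -[RHS]mulr_natr -[X in _ - X]mulr_natr.
by rewrite natrM; ring.
Qed.

Lemma mxtrace_Amat J (g : nat -> R) : \tr (Amat J g) = (-1) *+ J.
Proof.
rewrite /mxtrace; under eq_bigr do rewrite mxE eqxx.
by rewrite sum_arithmetic_diagonal; congr (_ *+ _); ring.
Qed.

Lemma mxtrace_Bmat J (g : nat -> R) : \tr (Bmat J g) = 1 *+ J.
Proof.
rewrite /mxtrace; under eq_bigr do rewrite mxE eqxx.
by rewrite sum_arithmetic_diagonal; congr (_ *+ _); ring.
Qed.

Variables (J : nat) (g : nat -> R).
Hypothesis J_gt0 : (0 < J)%N.

Lemma Amat_single_eigenvalue :
  (forall a b, eigenvalue (toCmx (Amat J g)) a -> eigenvalue (toCmx (Amat J g)) b -> a = b) ->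
  forall a, eigenvalue (toCmx (Amat J g)) a -> a = -1.
Proof.
by apply: single_eigenvalue_trace; rewrite // trace_map_mx mxtrace_Amat rmorphMn rmorphN1.
Qed.

Lemma Bmat_single_eigenvalue :
  (forall a b, eigenvalue (toCmx (Bmat J g)) a -> eigenvalue (toCmx (Bmat J g)) b -> a = b) ->
  forall a, eigenvalue (toCmx (Bmat J g)) a -> a = 1.
Proof.
by apply: single_eigenvalue_trace; rewrite // trace_map_mx mxtrace_Bmat rmorphMn rmorph1.
Qed.

Lemma char_poly_Hmat : char_poly (toCmx (Hmat J g)) =
  char_poly (toCmx (Amat J g)) * char_poly (toCmx (Bmat J g)).
Proof.
rewrite -char_poly_block_diag; apply: (char_poly_perm_conj (s := parity_perm J)).
have := congr1 (map_mx (real_complex R)) (Hmat_parity_blocks J g).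
by rewrite !map_mxM -map_trmx map_perm_mx map_block_mx !map_mx0.
Qed.

(* An eigenvalue of H of full multiplicity would be the single eigenvalue of
   both A and B, i.e. both -1 and 1. *)
Lemma Hmat_no_full_multiplicity (eta : complex R) :
  char_poly (toCmx (Hmat J g)) != ('X - eta%:P) ^+ (J + J).
Proof.
apply/negP => /eqP charH.
have root_eta x : root (char_poly (toCmx (Hmat J g))) x -> x = eta.
  by rewrite charH rootE horner_exp hornerXsubC expf_eq0 subr_eq0 => /andP[_ /eqP].
have A_eta x : eigenvalue (toCmx (Amat J g)) x -> x = eta.
  by rewrite eigenvalue_root_char => Ax; apply: root_eta; rewrite char_poly_Hmat rootM Ax.
have B_eta x : eigenvalue (toCmx (Bmat J g)) x -> x = eta.
  by rewrite eigenvalue_root_char => Bx; apply: root_eta; rewrite char_poly_Hmat rootM Bx orbT.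
have [a Aa] := eigenvalue_exists (toCmx (Amat J g)) J_gt0.
have [b Bb] := eigenvalue_exists (toCmx (Bmat J g)) J_gt0.
have a_m1 := Amat_single_eigenvalue (fun x y Ax Ay => etrans (A_eta x Ax) (esym (A_eta y Ay))) Aa.
have b_1 := Bmat_single_eigenvalue (fun x y Bx By => etrans (B_eta x Bx) (esym (B_eta y By))) Bb.
have : (-1 : complex R) = 1 by rewrite -a_m1 -b_1 (A_eta a Aa) (B_eta b Bb).
by move/eqP; rewrite -subr_eq0 -opprD oppr_eq0 (_ : 1 + 1 = 2%:R) // pnatr_eq0.
Qed.

End SpectralConstraints.

Section SpecialChoice.
Variables (R : rcfType) (J : nat).

Lemma uphalf_succ_odd i : (2 * i + 1).+1./2 = i.+1.
Proof. by rewrite -divn2; lia. Qed.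

Lemma uphalf_succ_even i : (2 * i + 2).+1./2 = i.+1.
Proof. by rewrite -divn2; lia. Qed.

Lemma gc_symmetric n : (1 <= n <= J + J - 2)%N -> gc R J n = gc R J (J + J - 1 - n)%N.
Proof.
move=> n_in; rewrite /gc /= !uphalfE.
have -> : (J + J - 1 - n).+1./2 = (J - n.+1./2)%N by rewrite -!divn2; lia.
have k_le : (n.+1./2 <= J)%N by rewrite -divn2; lia.
by rewrite subKn // mulnC.
Qed.

Lemma Amat_gc : Amat J (gc R J) = - 1%:M + 2 *: Tmat R J.
Proof.
apply/matrixP => -[i i_lt] [j j_lt]; rewrite !mxE /= /gc /= -val_eqE /= !uphalfE.
rewrite !uphalf_succ_odd.
dec_eqs; rewrite ?mulr0n ?mulr1n ?oppr0 ?add0r ?mulr0 ?mulrN //.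
by rewrite ?natrD ?natrM; ring.
Qed.

Lemma Bmat_gc : Bmat J (gc R J) = 1%:M + 2 *: Tmat R J.
Proof.
apply/matrixP => -[i i_lt] [j j_lt]; rewrite !mxE /= /gc /= -val_eqE /= !uphalfE.
rewrite !uphalf_succ_even.
dec_eqs; rewrite ?mulr0n ?mulr1n ?oppr0 ?add0r ?mulr0 ?mulrN //.
by rewrite ?natrD ?natrM; ring.
Qed.

End SpecialChoice.

Theorem lemma1 (R : rcfType) (J : nat) (hJ : (0 < J)%N) :
  (forall g : nat -> R,
     (forall n : nat, (1 <= n <= J + J - 2)%N -> g n = g (J + J - 1 - n)%N) ->
     let H := Hmat J g in
     let A := Amat J g in
     let B := Bmat J g in
     (* (a) *)
     (stablemx (Vodd R J) H^T /\ stablemx (Veven R J) H^T /\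
      exists s : 'S_(J + J),
        perm_mx s *m H *m (perm_mx s)^T = block_mx A 0 0 B) /\
     (* (b) *)
     ((forall a b : (complex R), eigenvalue (toCmx A) a -> eigenvalue (toCmx A) b -> a = b) ->
        forall a : (complex R), eigenvalue (toCmx A) a -> a = - 1) /\
     ((forall a b : (complex R), eigenvalue (toCmx B) a -> eigenvalue (toCmx B) b -> a = b) ->
        forall a : (complex R), eigenvalue (toCmx B) a -> a = 1) /\
     (forall eta : (complex R), char_poly (toCmx H) != ('X - eta%:P) ^+ (J + J))) /\
  (* (c) *)
  ((forall n : nat, (1 <= n <= J + J - 2)%N -> gc R J n = gc R J (J + J - 1 - n)%N) /\
   Amat J (gc R J) = - 1%:M + 2 *: Tmat R J /\
   Bmat J (gc R J) = 1%:M + 2 *: Tmat R J /\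
   char_poly (Amat J (gc R J)) = ('X + 1) ^+ J /\
   char_poly (Bmat J (gc R J)) = ('X - 1) ^+ J /\
   \rank (eigenspace (Amat J (gc R J)) (-1)) = 1%N /\
   \rank (eigenspace (Bmat J (gc R J)) 1) = 1%N).
Proof.
split.
  move=> g _ H A B; split.
    split; first exact: Vodd_stable.
    by split; [exact: Veven_stable | exists (parity_perm J); exact: Hmat_parity_blocks].
  split; first exact: Amat_single_eigenvalue.
  split; first exact: Bmat_single_eigenvalue.
  exact: Hmat_no_full_multiplicity.
have scalar_N1 : (-1)%:M = - 1%:M :> 'M[R]_J by rewrite raddfN.
have two_neq0 : (2 : R) != 0 by rewrite pnatr_eq0.
split; first exact: gc_symmetric.
split; first exact: Amat_gc.
split; first exact: Bmat_gc.
split; first by rewrite Amat_gc -scalar_N1 char_poly_affine_Tmat polyCN opprK polyC1.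
split; first by rewrite Bmat_gc char_poly_affine_Tmat polyC1.
case: J hJ scalar_N1 => // n _ scalar_N1.
split; rewrite /eigenspace.
  by rewrite Amat_gc scalar_N1 opprK addrAC addNr add0r kermx_scaled_Tmat_rank.
by rewrite Bmat_gc addrAC subrr add0r kermx_scaled_Tmat_rank.
Qed.
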